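(* Let $m$ be a monad and $r$ any type, and let $R = m\ r$. Let $\mathrm{ThrowT}\ r\ m\ e\ a$ be the type $(\forall b.\ e \to \mathrm{Cont}\ R\ b) \to \mathrm{Cont}\ R\ a$, with operations (writing $\mathrm{run}$ for application to the handler argument): $\mathrm{return}\ a = \lambda h.\ \mathrm{pure}_{\mathrm{Cont}}\ a$; $\ (x \gg\!= k) = \lambda h.\ x\ h \gg\!=_{\mathrm{Cont}} (\lambda a.\ k\ a\ h)$; $\mathrm{throwT}\ e = \lambda h.\ h\ e$; $\mathrm{catchT}\ x\ k = \lambda \mathit{outer}.\ \mathrm{callCC}\ (\lambda \mathit{normalExit}.\ \mathrm{callCCR2}\ (\lambda \mathit{newThrow}.\ x\ \mathit{newThrow} \gg\!=_{\mathrm{Cont}} \mathit{normalExit}) \gg\!=_{\mathrm{Cont}} (\lambda e.\ k\ e\ \mathit{outer}))$, where $\mathrm{catchT} : \mathrm{ThrowT}\ r\ m\ e\ a \to (e \to \mathrm{ThrowT}\ r\ m\ f\ a) \to \mathrm{ThrowT}\ r\ m\ f\ a$. Let likewise $\mathrm{ThrowT}'\ m\ e\ a = \forall r.\ (\forall b.\ e \to \mathrm{Cont}\ (m\ r)\ b) \to \mathrm{Cont}\ (m\ r)\ a$ with the same defining bodies for all four operations. Then both $\mathrm{ThrowT}\ r\ m$ and $\mathrm{ThrowT}'\ m$ are conjoinedly monadic error algebras (with $(\mathrm{return}, \gg\!=)$ in the value index and $(\mathrm{throwT}, \mathrm{catchT})$ in the error index).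
   Context: $\mathrm{Cont}\ R\ a = (a \to R) \to R$, with $\mathrm{pure}_{\mathrm{Cont}}\ a = \lambda c.\ c\ a$ and $(x \gg\!=_{\mathrm{Cont}} f) = \lambda c.\ x\ (\lambda a.\ f\ a\ c)$. $\mathrm{callCC} : ((a \to \mathrm{Cont}\ R\ b) \to \mathrm{Cont}\ R\ a) \to \mathrm{Cont}\ R\ a$ is $\mathrm{callCC}\ f = \lambda c.\ f\ (\lambda a.\ \lambda\_.\ c\ a)\ c$, and $\mathrm{callCCR2} : ((\forall b.\ a \to \mathrm{Cont}\ R\ b) \to \mathrm{Cont}\ R\ a) \to \mathrm{Cont}\ R\ a$ is the same term with this rank-2 type. Equality is extensional. A conjoinedly monadic error algebra is a type constructor $M$ of two type arguments (error index $e$, value index $a$) with operations $\mathrm{return} : a \to M\ e\ a$, $(\gg\!=) : M\ e\ a \to (a \to M\ e\ b) \to M\ e\ b$, $\mathrm{throw} : e \to M\ e\ a$, $\mathrm{catch} : M\ e\ a \to (e \to M\ f\ a) \to M\ f\ a$ such that: for every fixed $e$, $(\mathrm{return}, \gg\!=)$ satisfy the monad laws in $a$; for every fixed $a$, $(\mathrm{throw}, \mathrm{catch})$ satisfy the monad laws in $e$ ($\mathrm{catch}\ (\mathrm{throw}\ e)\ h = h\ e$, $\mathrm{catch}\ p\ \mathrm{throw} = p$, $\mathrm{catch}\ (\mathrm{catch}\ p\ g)\ h = \mathrm{catch}\ p\ (\lambda x.\ \mathrm{catch}\ (g\ x)\ h)$); and $\mathrm{catch}\ (\mathrm{return}\ x)\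 f = \mathrm{return}\ x$ and $\mathrm{throw}\ e \gg\!= f = \mathrm{throw}\ e$. *)

Set Implicit Arguments.

Definition Cont (R a : Type) : Type := (a -> R) -> R.
Definition pureC {R a : Type} (x : a) : Cont R a := fun c => c x.
Definition bindC {R a b : Type} (x : Cont R a) (f : a -> Cont R b) : Cont R b :=
  fun c => x (fun y => f y c).
Definition callCC {R a b : Type} (f : (a -> Cont R b) -> Cont R a) : Cont R a :=
  fun c => f (fun y => fun _ => c y) c.
Definition callCCR2 {R a : Type} (f : (forall b : Type, a -> Cont R b) -> Cont R a)
  : Cont R a := fun c => f (fun b y => fun _ => c y) c.

Definition MonadLaws (m : Type -> Type) (retm : forall a, a -> m a)
  (bindm : forall a b, m a -> (a -> m b) -> m b) : Prop :=
  (forall a b (x : a) (k : a -> m b), bindm _ _ (retm _ x) k = k x) /\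
  (forall a (p : m a), bindm _ _ p (retm _) = p) /\
  (forall a b c (p : m a) (f : a -> m b) (g : b -> m c),
      bindm _ _ (bindm _ _ p f) g = bindm _ _ p (fun x => bindm _ _ (f x) g)).

(** * Conjoinedly monadic error algebras.
    [ok] singles out the elements of [M e a] the laws range over (here: the
    parametric ones) and [eqv] is the (extensional) equality. *)
Record CMEA (M : Type -> Type -> Type)
  (ret : forall e a, a -> M e a)
  (bind : forall e a b, M e a -> (a -> M e b) -> M e b)
  (throw : forall e a, e -> M e a)
  (catch : forall e f a, M e a -> (e -> M f a) -> M f a)
  (ok : forall e a, M e a -> Prop)
  (eqv : forall e a, M e a -> M e a -> Prop) : Prop := {
  ok_ret : forall e a (x : a), ok _ _ (ret e a x);
  ok_bind : forall e a b (p : M e a) (k : a -> M e b),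
      ok _ _ p -> (forall x, ok _ _ (k x)) -> ok _ _ (bind _ _ _ p k);
  ok_throw : forall e a (x : e), ok _ _ (throw e a x);
  ok_catch : forall e f a (p : M e a) (h : e -> M f a),
      ok _ _ p -> (forall x, ok _ _ (h x)) -> ok _ _ (catch _ _ _ p h);
  bind_ret_l : forall e a b (x : a) (k : a -> M e b),
      (forall y, ok _ _ (k y)) -> eqv _ _ (bind _ _ _ (ret e a x) k) (k x);
  bind_ret_r : forall e a (p : M e a), ok _ _ p -> eqv _ _ (bind _ _ _ p (ret e a)) p;
  bind_assoc : forall e a b c (p : M e a) (f : a -> M e b) (g : b -> M e c),
      ok _ _ p -> (forall x, ok _ _ (f x)) -> (forall y, ok _ _ (g y)) ->
      eqv _ _ (bind _ _ _ (bind _ _ _ p f) g) (bind _ _ _ p (fun x => bind _ _ _ (f x) g));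
  catch_throw_l : forall e f a (x : e) (h : e -> M f a),
      (forall y, ok _ _ (h y)) -> eqv _ _ (catch _ _ _ (throw e a x) h) (h x);
  catch_throw_r : forall e a (p : M e a), ok _ _ p -> eqv _ _ (catch _ _ _ p (throw e a)) p;
  catch_assoc : forall e f g a (p : M e a) (k : e -> M f a) (h : f -> M g a),
      ok _ _ p -> (forall x, ok _ _ (k x)) -> (forall y, ok _ _ (h y)) ->
      eqv _ _ (catch _ _ _ (catch _ _ _ p k) h) (catch _ _ _ p (fun x => catch _ _ _ (k x) h));
  catch_ret : forall e f a (x : a) (h : e -> M f a),
      (forall y, ok _ _ (h y)) -> eqv _ _ (catch _ _ _ (ret e a x) h) (ret f a x);
  bind_throw : forall e a b (x : e) (k : a -> M e b),
      (forall y, ok _ _ (k y)) -> eqv _ _ (bind _ _ _ (throw e a x) k) (throw e b x)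
}.

Definition ThrowT (r : Type) (m : Type -> Type) (e a : Type) : Type :=
  (forall b : Type, e -> Cont (m r) b) -> Cont (m r) a.

Definition retT (r : Type) (m : Type -> Type) (e a : Type) (x : a) : ThrowT r m e a :=
  fun h => pureC x.
Definition bindT (r : Type) (m : Type -> Type) (e a b : Type)
  (x : ThrowT r m e a) (k : a -> ThrowT r m e b) : ThrowT r m e b :=
  fun h => bindC (x h) (fun y => k y h).
Definition throwT (r : Type) (m : Type -> Type) (e a : Type) (x : e) : ThrowT r m e a :=
  fun h => h a x.
Definition catchT (r : Type) (m : Type -> Type) (e f a : Type)
  (x : ThrowT r m e a) (k : e -> ThrowT r m f a) : ThrowT r m f a :=
  fun outer =>
    callCC (fun normalExit : a -> Cont (m r) e =>
      bindC (callCCR2 (fun newThrow => bindC (x newThrow) normalExit))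
            (fun y => k y outer)).

(** Parametricity (logical relation) for handlers of type
    [forall b, e -> Cont R b], with [R] and [e] related by equality. *)
Definition HandlerRel (R e : Type) (h h' : forall b : Type, e -> Cont R b) : Prop :=
  forall (b b' : Type) (Rb : b -> b' -> Prop) (x : e) (k : b -> R) (k' : b' -> R),
    (forall y y', Rb y y' -> k y = k' y') -> h b x k = h' b' x k'.

(** Extensional equality of [ThrowT] computations (up to parametricity):
    related handlers and equal continuations give equal results. *)
Definition ThrowEq (r : Type) (m : Type -> Type) (e a : Type)
  (x y : ThrowT r m e a) : Prop :=
  forall h h', HandlerRel h h' -> forall c : a -> m r, x h c = y h' c.

Definition ThrowOk (r : Type) (m : Type -> Type) (e a : Type) (x : ThrowT r m e a) : Prop :=
  ThrowEq x x.

Definition ThrowT' (m : Type -> Type) (e a : Type) : Type :=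
  forall r : Type, (forall b : Type, e -> Cont (m r) b) -> Cont (m r) a.

Definition retT' (m : Type -> Type) (e a : Type) (x : a) : ThrowT' m e a :=
  fun r h => pureC x.
Definition bindT' (m : Type -> Type) (e a b : Type)
  (x : ThrowT' m e a) (k : a -> ThrowT' m e b) : ThrowT' m e b :=
  fun r h => bindC (x r h) (fun y => k y r h).
Definition throwT' (m : Type -> Type) (e a : Type) (x : e) : ThrowT' m e a :=
  fun r h => h a x.
Definition catchT' (m : Type -> Type) (e f a : Type)
  (x : ThrowT' m e a) (k : e -> ThrowT' m f a) : ThrowT' m f a :=
  fun r outer =>
    callCC (fun normalExit : a -> Cont (m r) e =>
      bindC (callCCR2 (fun newThrow => bindC (x r newThrow) normalExit))
            (fun y => k y r outer)).

Definition ThrowEq' (m : Type -> Type) (e a : Type) (x y : ThrowT' m e a) : Prop :=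
  forall r : Type, ThrowEq (x r) (y r).
Definition ThrowOk' (m : Type -> Type) (e a : Type) (x : ThrowT' m e a) : Prop :=
  forall r : Type, ThrowOk (x r).

From Stdlib Require Import FunctionalExtensionality.
Set Implicit Arguments.

(* A handler [forall b, e -> Cont R b] that is parametric in [b] cannot use
   its continuation (instantiate [b] by an empty type), so it is merely an
   [e]-indexed family of answers.  Unfolding the two continuations captured
   by [catchT p k] then shows that it runs [p] with the handler
   [y |-> k y outer c], and every law becomes a conversion plus parametricity
   of the arguments.  [ThrowT' m] is the product over [r] of the [ThrowT r m]
   with pointwise operations, and a product of conjoinedly monadic error
   algebras is again one. *)

Section Handlers.
Variables R e : Type.
Implicit Types h : forall b : Type, e -> Cont R b.

Lemma HandlerRel_elim h h' :
  HandlerRel h h' -> forall b b' x k k', h b x k = h' b' x k'.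
Proof. intros H b b' x k k'. apply (H b b' (fun _ _ => False)). intros _ _ []. Qed.

Lemma HandlerRel_intro h h' :
  (forall b b' x k k', h b x k = h' b' x k') -> HandlerRel h h'.
Proof. intros H b b' Rb x k k' _. apply H. Qed.

End Handlers.

Section ThrowTLaws.
Variables (r : Type) (m : Type -> Type).

Lemma catchT_run e f a (p : ThrowT r m e a) (k : e -> ThrowT r m f a) outer c :
  catchT p k outer c = p (fun b y _ => k y outer c) c.
Proof. reflexivity. Qed.

Lemma HandlerRel_resume e f a (k k' : e -> ThrowT r m f a) outer outer'
    (c : a -> m r) :
  (forall y, ThrowEq (k y) (k' y)) -> HandlerRel outer outer' ->
  HandlerRel (fun b y (_ : b -> m r) => k y outer c)
             (fun b y (_ : b -> m r) => k' y outer' c).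
Proof. intros Hk Ho. apply HandlerRel_intro. intros. apply Hk, Ho. Qed.

Lemma ThrowOk_bindT e a b (p : ThrowT r m e a) (k : a -> ThrowT r m e b) :
  ThrowOk p -> (forall y, ThrowOk (k y)) -> ThrowOk (bindT p k).
Proof.
  intros Hp Hk h h' H c. unfold bindT, bindC.
  rewrite (Hp h h' H). f_equal. extensionality y. apply Hk, H.
Qed.

Lemma ThrowOk_catchT e f a (p : ThrowT r m e a) (k : e -> ThrowT r m f a) :
  ThrowOk p -> (forall y, ThrowOk (k y)) -> ThrowOk (catchT p k).
Proof.
  intros Hp Hk h h' H c. rewrite !catchT_run.
  apply Hp, HandlerRel_resume; assumption.
Qed.

Lemma ThrowT_CMEA :
  CMEA (ThrowT r m) (retT r m) (bindT (r:=r) (m:=m)) (throwT r m)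
       (catchT (r:=r) (m:=m)) (ThrowOk (r:=r) (m:=m)) (ThrowEq (r:=r) (m:=m)).
Proof.
  constructor.
  - intros e a x h h' _ c. reflexivity.
  - exact ThrowOk_bindT.
  - intros e a x h h' H c. apply (HandlerRel_elim H).
  - exact ThrowOk_catchT.
  - intros e a b x k Hk. exact (Hk x).
  - intros e a p Hp. exact Hp.
  - intros e a b c p f g Hp Hf Hg.
    exact (ThrowOk_bindT _ Hp (fun x => ThrowOk_bindT _ (Hf x) Hg)).
  - intros e f a x k Hk. exact (Hk x).
  - intros e a p Hp h h' H c. rewrite catchT_run.
    apply Hp, HandlerRel_intro. intros. apply (HandlerRel_elim H).
  - intros e f g a p k k' Hp Hk Hk'.
    exact (ThrowOk_catchT _ Hp (fun x => ThrowOk_catchT _ (Hk x) Hk')).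
  - intros e f a x k _ h h' _ c. reflexivity.
  - intros e a b x k _ h h' H c. apply (HandlerRel_elim H).
Qed.

End ThrowTLaws.

Section ProductCMEA.
Variables (I : Type) (M : I -> Type -> Type -> Type)
  (ret : forall i e a, a -> M i e a)
  (bind : forall i e a b, M i e a -> (a -> M i e b) -> M i e b)
  (throw : forall i e a, e -> M i e a)
  (catch : forall i e f a, M i e a -> (e -> M i f a) -> M i f a)
  (ok : forall i e a, M i e a -> Prop)
  (eqv : forall i e a, M i e a -> M i e a -> Prop).
Hypothesis HM :
  forall i, CMEA (M i) (@ret i) (@bind i) (@throw i) (@catch i) (@ok i) (@eqv i).

Lemma CMEA_forall :
  CMEA (fun e a => forall i, M i e a)
    (fun e a x i => @ret i e a x)
    (fun e a b p k i => @bind i e a b (p i) (fun x => k x i))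
    (fun e a x i => @throw i e a x)
    (fun e f a p k i => @catch i e f a (p i) (fun x => k x i))
    (fun e a p => forall i, @ok i e a (p i))
    (fun e a p q => forall i, @eqv i e a (p i) (q i)).
Proof.
  constructor; intros.
  - apply (ok_ret (HM i)).
  - apply (ok_bind (HM i)); auto.
  - apply (ok_throw (HM i)).
  - apply (ok_catch (HM i)); auto.
  - apply (bind_ret_l (HM i)); auto.
  - apply (bind_ret_r (HM i)); auto.
  - apply (bind_assoc (HM i)); auto.
  - apply (catch_throw_l (HM i)); auto.
  - apply (catch_throw_r (HM i)); auto.
  - apply (catch_assoc (HM i)); auto.
  - apply (catch_ret (HM i)); auto.
  - apply (bind_throw (HM i)); auto.
Qed.

End ProductCMEA.

Theorem theorem8 (m : Type -> Type) (retm : forall a, a -> m a)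
  (bindm : forall a b, m a -> (a -> m b) -> m b)
  (Hm : MonadLaws m retm bindm) (r : Type) :
  CMEA (ThrowT r m) (retT r m) (bindT (r:=r) (m:=m)) (throwT r m) (catchT (r:=r) (m:=m))
       (ThrowOk (r:=r) (m:=m)) (ThrowEq (r:=r) (m:=m)) /\
  CMEA (ThrowT' m) (retT' m) (bindT' (m:=m)) (throwT' m) (catchT' (m:=m))
       (ThrowOk' (m:=m)) (ThrowEq' (m:=m)).
Proof.
  split.
  - exact (ThrowT_CMEA r m).
  - exact (@CMEA_forall _ _ _ _ _ _ _ _ (fun r' => ThrowT_CMEA r' m)).
Qed.
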